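(* Let $G$ be a finite group and let $\chi$ be the character of an irreducible complex representation of $G$ that is realizable over $\mathbb{R}$. Write $\chi\otimes\chi=a_1\chi_1+\cdots+a_q\chi_q$ with positive integers $a_i$ and irreducible characters $\chi_i$ of dimensions $n_i=\chi_i(1)$. Then for every $g\in G$, $$c(g)\le\frac{(a_1/n_1^2)\chi_1(g)+\cdots+(a_q/n_q^2)\chi_q(g)}{a_1n_1+\cdots+a_qn_q},\qquad c(G)\le\frac{a_1/n_1+\cdots+a_q/n_q}{a_1n_1+\cdots+a_qn_q}.$$
   Context: For $g\in G$, $c(g)=|\{(x,y)\in G\times G:[x,y]=g\}|/|G|^2$, and $c(G)=c(1)$. *)

From HB Require Import structures.
From mathcomp Require Import all_boot all_order all_algebra all_fingroup all_solvable all_field all_character.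
Set Implicit Arguments. Unset Strict Implicit. Unset Printing Implicit Defensive.
Import Order.TTheory GRing.Theory Num.Theory.
Local Open Scope ring_scope.

Definition comm_prob (gT : finGroupType) (G : {group gT}) (g : gT) : algC :=
  (#|[set xy : gT * gT | [&& xy.1 \in G, xy.2 \in G & ([~ xy.1, xy.2])%g == g]]|%:R)
  / (#|G|%:R ^+ 2).

Definition real_realizable (gT : finGroupType) (G : {group gT}) (chi : 'CF(G)) :=
  exists n (rG : mx_representation algC G n),
    (forall x, x \in G -> rG x \is a mxOver Num.real) /\ cfRepr rG = chi.

From HB Require Import structures.
From mathcomp Require Import all_boot all_order all_algebra all_fingroup all_solvable all_field all_character.

(* For an irreducible character psi of degree n, Schur's lemma applied to the
   class sums gives \sum_y psi (a * b ^ y) = #|G| psi a psi b / n; with the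
   generalized orthogonality relation this yields
   \sum_(x, y) psi ([~ x, y] * g) = #|G|^2 psi g / n^2.  As chi is real,
   phi = chi * chi is a nonnegative class function, hence
   #|G|^2 c(g) phi 1 <= \sum_(x, y) phi ([~ x, y] * g).  Expanding
   phi = \sum_j a_j chi_j and dividing by phi 1 = \sum_j a_j n_j gives the
   bound; the case g = 1 is the second one. *)

Set Implicit Arguments.
Unset Strict Implicit.
Unset Printing Implicit Defensive.

Import Order.TTheory GRing.Theory Num.Theory.
Local Open Scope ring_scope.

Section CommutatorSums.

Variables (gT : finGroupType) (G : {group gT}).

Lemma cfun_mulgC (phi : 'CF(G)) u v : v \in G -> phi (u * v)%g = phi (v * u)%g.
Proof. by move=> Gv; rewrite -(cfunJ phi (v * u) Gv) conjgE !mulgA mulVg mul1g. Qed.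

(* Schur's lemma: the sum commutes with rG, so it is the scalar fixed by its trace. *)
Lemma sum_repr_conj_scalar n (rG : mx_representation algC G n) b :
    mx_absolutely_irreducible rG -> b \in G ->
  (\sum_(y in G) rG (b ^ y)%g) *+ n = (#|G|%:R * \tr (rG b))%:M.
Proof.
move=> absG Gb; set M := \sum_(y in G) _.
have cM : centgmx rG M.
  apply/centgmxP => z Gz; rewrite mulmx_suml mulmx_sumr.
  rewrite [RHS](reindex_inj (mulIg z)) /=.
  apply: eq_big => [y | y Gy]; first by rewrite groupMr.
  rewrite -!repr_mxM ?groupJ ?groupM //.
  by rewrite !conjgE invMg !mulgA mulgV mul1g.
have trM : \tr M = #|G|%:R * \tr (rG b).
  rewrite raddf_sum mulr_natl -sumr_const; apply: eq_bigr => y Gy /=.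
  rewrite conjgE !repr_mxM ?groupM ?groupV // mxtrace_mulC -mulmxA.
  by rewrite -repr_mxM ?groupV // mulgV repr_mx1 mulmx1.
have [e De] := is_scalar_mxP (mx_abs_irr_cent_scalar absG cM).
by rewrite -trM De mxtrace_scalar raddfMn.
Qed.

Lemma irr_sum_conj (i : Iirr G) a b : a \in G -> b \in G ->
  (\sum_(y in G) 'chi_i (a * b ^ y)%g) * 'chi_i 1%g
    = #|G|%:R * 'chi_i a * 'chi_i b.
Proof.
move=> Ga Gb; have absG := groupC (socle_irr (socle_of_Iirr i)).
rewrite -irrRepr cfRepr1 !cfunE Ga Gb !mulr1n mulr_natr.
rewrite -[RHS]mulrA [RHS]mulrCA [RHS]mulrC -mxtraceZ -mul_mx_scalar.
rewrite -sum_repr_conj_scalar // !raddfMn /= mulmx_sumr raddf_sum; congr (_ *+ _).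
by apply: eq_bigr => y Gy; rewrite cfunE groupM ?groupJ // mulr1n repr_mxM ?groupJ.
Qed.

Lemma irr_sum_commutator (i : Iirr G) g : g \in G ->
  (\sum_(x in G) \sum_(y in G) 'chi_i ([~ x, y] * g)%g) * 'chi_i 1%g ^+ 2
    = #|G|%:R ^+ 2 * 'chi_i g.
Proof.
move=> Gg; have n0 := irr1_neq0 i.
have sum_y x : x \in G -> (\sum_(y in G) 'chi_i ([~ x, y] * g)%g) * 'chi_i 1%g
                          = #|G|%:R * ('chi_i (g * x^-1)%g * 'chi_i x).
  move=> Gx; rewrite mulrA -irr_sum_conj ?groupM ?groupV //; congr (_ * _).
  by apply: eq_bigr => y Gy; rewrite commgEl (cfun_mulgC _ _ Gg) mulgA.
have orth : \sum_(x in G) 'chi_i (g * x^-1)%g * 'chi_i x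
              = #|G|%:R * ('chi_i g / 'chi_i 1%g).
  have := generalized_orthogonality_relation g i i.
  rewrite eqxx mul1r => /(canRL (mulVKf (neq0CG G))) <-.
  rewrite (reindex_inj invg_inj) /=.
  apply: eq_big => [x | x Gx]; first by rewrite groupV.
  by rewrite invgK (cfun_mulgC _ _ Gg).
rewrite expr2 mulrA mulr_suml.
under eq_bigr => x Gx do rewrite sum_y //.
by rewrite -mulr_sumr orth -!mulrA mulVf // mulr1 mulrA -expr2.
Qed.

Lemma cfun_constt_sumE (phi : 'CF(G)) x :
  phi x = \sum_(j in irr_constt phi) '[phi, 'chi_j] * 'chi_j x.
Proof.
by rewrite {1}[phi]cfun_sum_constt sum_cfunE; apply: eq_bigr => j _; rewrite cfunE.
Qed.

Lemma cfun_sum_commutator (phi : 'CF(G)) g : g \in G ->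
  \sum_(x in G) \sum_(y in G) phi ([~ x, y] * g)%g
    = #|G|%:R ^+ 2 *
      \sum_(j in irr_constt phi) '[phi, 'chi_j] / 'chi_j 1%g ^+ 2 * 'chi_j g.
Proof.
move=> Gg.
transitivity (\sum_(j in irr_constt phi)
               '[phi, 'chi_j] * \sum_(x in G) \sum_(y in G) 'chi_j ([~ x, y] * g)%g).
  under eq_bigr => x _ do under eq_bigr => y _ do rewrite cfun_constt_sumE.
  under eq_bigr => x _ do rewrite exchange_big /=.
  rewrite exchange_big /=; apply: eq_bigr => j _.
  by rewrite mulr_sumr; apply: eq_bigr => x _; rewrite mulr_sumr.
rewrite mulr_sumr; apply: eq_bigr => j _.
have nj : 'chi_j 1%g ^+ 2 != 0 by rewrite expf_neq0 ?irr1_neq0.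
rewrite (canRL (mulfK nj) (irr_sum_commutator j Gg)) -[_ * 'chi_j g / _]mulrA.
by rewrite mulrCA; congr (_ * _); rewrite mulrA mulrAC.
Qed.

Lemma comm_probE g :
  comm_prob G g = (\sum_(x in G) \sum_(y in G) ([~ x, y] == g)%g%:R) / #|G|%:R ^+ 2.
Proof.
rewrite /comm_prob; congr (_ / _).
rewrite pair_big /= -sum1_card natr_sum [LHS]big_mkcond [RHS]big_mkcond /=.
apply: eq_bigr => p _; rewrite inE andbA.
by case: (_ && (p.2 \in G)); case: eqP.
Qed.

Lemma comm_prob_cfun_le (phi : 'CF(G)) g :
    g \in G -> {in G, forall h, 0 <= phi h} ->
  comm_prob G g * phi 1%g
    <= (\sum_(x in G) \sum_(y in G) phi ([~ x, y] * g)%g) / #|G|%:R ^+ 2.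
Proof.
move=> Gg phi_ge0; rewrite comm_probE mulrAC.
rewrite ler_wpM2r ?invr_ge0 ?exprn_ge0 ?ler0n //.
rewrite mulr_suml [leRHS]exchange_big /=.
apply: ler_sum => x Gx; rewrite mulr_suml; apply: ler_sum => y Gy.
(* a pair with [~ x, y] = g is matched by the pair (y, x), where [~ y, x] * g = 1 *)
case: eqP => [<- | _]; first by rewrite mul1r -invgR mulVg.
by rewrite mul0r; apply: phi_ge0; rewrite groupM ?groupR.
Qed.

Lemma comm_prob_le_constt (phi : 'CF(G)) g :
    g \in G -> {in G, forall h, 0 <= phi h} -> 0 < phi 1%g ->
  comm_prob G g
    <= (\sum_(j in irr_constt phi) '[phi, 'chi_j] / 'chi_j 1%g ^+ 2 * 'chi_j g)
       / (\sum_(j in irr_constt phi) '[phi, 'chi_j] * 'chi_j 1%g).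
Proof.
move=> Gg phi_ge0 phi1_gt0; rewrite -cfun_constt_sumE ler_pdivlMr //.
apply: le_trans (comm_prob_cfun_le Gg phi_ge0) _.
by rewrite cfun_sum_commutator // mulrAC divff ?mul1r // expf_neq0 ?neq0CG.
Qed.

Lemma real_realizable_real (chi : 'CF(G)) :
  real_realizable chi -> {in G, forall x, chi x \is Num.real}.
Proof.
case=> n [rG [rG_real <-]] x Gx; rewrite cfunE Gx mulr1n.
by apply: rpred_sum => k _; apply: (mxOverP (rG_real x Gx)).
Qed.

Lemma cfun_sqr_ge0 (chi : 'CF(G)) :
  {in G, forall x, chi x \is Num.real} -> {in G, forall x, 0 <= (chi * chi) x}.
Proof. by move=> chiR x Gx; rewrite cfunE -expr2 real_exprn_even_ge0 ?chiR. Qed.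

End CommutatorSums.

Theorem corollary6 (gT : finGroupType) (G : {group gT}) (i : Iirr G) :
  real_realizable 'chi[G]_i ->
  (forall g, g \in G ->
     comm_prob G g <=
       (\sum_(j in irr_constt ('chi_i * 'chi_i))
           '['chi_i * 'chi_i, 'chi_j] / ('chi_j 1%g) ^+ 2 * 'chi_j g)
       / (\sum_(j in irr_constt ('chi_i * 'chi_i))
           '['chi_i * 'chi_i, 'chi_j] * 'chi_j 1%g))
  /\
  comm_prob G 1%g <=
       (\sum_(j in irr_constt ('chi_i * 'chi_i))
           '['chi_i * 'chi_i, 'chi_j] / 'chi_j 1%g)
       / (\sum_(j in irr_constt ('chi_i * 'chi_i))
           '['chi_i * 'chi_i, 'chi_j] * 'chi_j 1%g).
Proof.
move=> /real_realizable_real/cfun_sqr_ge0 phi_ge0.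
have phi1_gt0 : 0 < ('chi_i * 'chi_i) 1%g by rewrite cfunE mulr_gt0 ?irr1_gt0.
have bound g (Gg : g \in G) := comm_prob_le_constt Gg phi_ge0 phi1_gt0.
split=> //; have := bound 1%g (group1 G).
congr (_ <= _ / _); apply: eq_bigr => j _.
by rewrite expr2 invfM mulrA mulfVK ?irr1_neq0.
Qed.
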